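(* Let $n\ge 2$ and $N=\{1,\dots,n\}$. Consider the randomized selection mechanism Simple $k$-sample on $\mathcal{G}_n$, with $k=\left\lceil 4^{1/3} n^{2/3} \ln^{1/3} n\right\rceil$: it forms a sample $S$ by selecting $k$ times a vertex of $N$ uniformly at random with replacement ($S$ is a multiset), and returns as winner (if any) a vertex $w\in\arg\max_{u\in N\setminus S}\delta_S(u,\mathbf{x})$, where in $\delta_S(u,\mathbf{x})$ each edge from a vertex of $S$ is counted with the multiplicity of that vertex in $S$. Then this mechanism is impartial and $\Theta(n^{2/3}\ln^{1/3} n)$-additive, i.e., $\max_{\mathbf{x}\in\mathcal{G}_n}\{\Delta(\mathbf{x})-\mathbb{E}[\delta(f(\mathbf{x}))]\}=O(n^{2/3}\ln^{1/3}n)$.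
   Context: $\mathcal{G}_n$ is the set of all directed graphs (nomination profiles) on vertex set $N=\{1,\dots,n\}$ with no self-loops; each vertex may have any out-degree (including $0$). For a profile $\mathbf{x}$, $x_u$ is the set of outgoing edges of $u$, and $(x'_u,\mathbf{x}_{-u})$ is the profile in which $u$'s outgoing edges are replaced by $x'_u$. $\delta_S(u,\mathbf{x})$ is the in-degree of $u$ counting only edges originating from $S$; $\delta(u,\mathbf{x})=\delta_N(u,\mathbf{x})$; $\Delta(\mathbf{x})=\max_u\delta(u,\mathbf{x})$. A selection mechanism $f$ maps each profile to a probability distribution over the vertices together with the option of no winner. It is impartial if for every profile $\mathbf{x}$, every vertex $u$ and every alternative set of outgoing edges $x'_u$, the probability that $u$ is selected is the same under $\mathbf{x}$ and $(x'_u,\mathbf{x}_{-u})$. $\mathbb{E}[\delta(f(\mathbf{x}))]=\sum_u \Pr[f(\mathbf{x})=u]\,\delta(u,\mathbf{x})$ (no winner contributes $0$). $f$ is $\alpha(n)$-additive if $\max_{\mathbf{x}\in\mathcal{G}_n}\{\Delta(\mathbf{x})-\mathbb{E}[\delta(f(\mathbf{x}))]\}\le\alpha(n)$ for every $n$. *)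

From HB Require Import structures.
From mathcomp Require Import all_boot all_order all_algebra.
From mathcomp Require Import all_classical all_reals all_analysis.
Set Implicit Arguments. Unset Strict Implicit. Unset Printing Implicit Defensive.
Import Order.TTheory GRing.Theory Num.Theory.

(* Vertex set N = {1,...,n} is modelled by 'I_n.
   A nomination profile assigns to each vertex its set of out-neighbours. *)
Definition profile (n : nat) := {ffun 'I_n -> {set 'I_n}}.

Definition valid_profile n (x : profile n) : Prop := forall u, u \notin x u.

(* in-degree of u counting only edges from the sample s (a sequence = multiset,
   each vertex counted with its multiplicity in s) *)
Definition indegS n (s : seq 'I_n) (x : profile n) (u : 'I_n) : nat :=
  count (fun v => u \in x v) s.

Definition indeg n (x : profile n) (u : 'I_n) : nat :=
  #|[set v | u \in x v]|.

Definition maxindeg n (x : profile n) : nat := \max_(u : 'I_n) indeg x u.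

(* The winner of Simple k-sample for a given sample s : a vertex of N \ S
   maximizing delta_S (ties broken by a fixed rule: [arg max] of fintype),
   or no winner if N \ S is empty. *)
Definition winner n k (s : k.-tuple 'I_n) (x : profile n) : option 'I_n :=
  match [pick u | u \notin s] with
  | Some u0 => Some [arg max_(w > u0 | w \notin s) indegS s x w]
  | None => None
  end.

Local Open Scope ring_scope.

(* Pr[f(x) = u], sample drawn uniformly among the n^k ordered k-tuples
   (k independent uniform draws with replacement) *)
Definition prob_win (R : realType) n k (x : profile n) (u : 'I_n) : R :=
  (#|[set s : k.-tuple 'I_n | winner s x == Some u]|%:R) / ((n ^ k)%N%:R).

(* E[delta(f(x))] ; no winner contributes 0 *)
Definition exp_deg (R : realType) n k (x : profile n) : R :=
  (\sum_(s : k.-tuple 'I_n)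
      (match winner s x with Some w => indeg x w | None => 0%N end)%:R)
  / ((n ^ k)%N%:R).

Definition ksample (R : realType) (n : nat) : nat :=
  `| Num.ceil (powR (4 : R) (1/3) * powR (n%:R) (2/3) * powR (ln (n%:R)) (1/3)) |%N.

Definition impartial (R : realType) n k : Prop :=
  forall (x x' : profile n) (u : 'I_n),
    valid_profile x -> valid_profile x' ->
    (forall v, v != u -> x' v = x v) ->
    prob_win R k x u = prob_win R k x' u.

From HB Require Import structures.
From mathcomp Require Import all_boot all_order all_algebra.
From mathcomp Require Import all_classical all_reals all_analysis.
From mathcomp Require Import ring lra.
Import Order.TTheory GRing.Theory Num.Theory.
Set Implicit Arguments. Unset Strict Implicit. Unset Printing Implicit Defensive.
Local Open Scope ring_scope.

(* Let u be a vertex of maximum in-degree. If u is not sampled and the winner w has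
   delta(w) < delta(u) - t, then w is a vertex v with delta(u) - delta(v) > t
   and delta_S(v) >= delta_S(u). Each draw moves delta_S(v) - delta_S(u) by a
   step in {-1, 0, 1} of mean -(delta(u) - delta(v))/n, so an exponential-moment
   (Chernoff) bound makes this event have probability at most
   exp(-k t^2 / (4 n^2)). Since u is sampled with probability at most k/n, the
   expected loss is at most t + k + n^2 exp(-k t^2 / (4 n^2)); with
   M = (n^2 ln n)^(1/3), t = 3M and M <= k <= 4^(1/3) M + 1 the last term is at
   most 1, so the loss is O(M). *)

Lemma mulr_subXX_le (R : realDomainType) (a b : R) (k : nat) :
  0 <= a -> a <= b -> b <= a + 1 -> b * (b ^+ k - a ^+ k) <= k%:R * b ^+ k.
Proof.
move=> a_ge0 le_ab le_ba1; have b_ge0 : 0 <= b by apply: le_trans le_ab.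
elim: k => [|k IHk]; first by rewrite !expr0 subrr mulr0 mul0r.
have ak_ge0 : 0 <= a ^+ k by exact: exprn_ge0.
have le_akbk : a ^+ k <= b ^+ k by exact: lerXn2r.
have -> : b * (b ^+ k.+1 - a ^+ k.+1)
        = b * (b * (b ^+ k - a ^+ k)) + b * (a ^+ k * (b - a)).
  by rewrite !exprS; ring.
rewrite exprS -natr1 mulrDl mul1r; apply: lerD.
  by rewrite [in leRHS]mulrCA; apply: ler_wpM2l.
apply: ler_wpM2l => //; rewrite -[b ^+ k]mulr1.
by apply: ler_pM => //; lra.
Qed.

Lemma sumr_pred_card (R : pzSemiRingType) (T : finType) (P : pred T) :
  \sum_y ((P y)%:R : R) = #|P|%:R.
Proof.
rewrite -sumr_const [RHS]big_mkcond /=.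
by apply: eq_bigr => y _; rewrite unfold_in; case: (P y).
Qed.

Lemma prodr_expr_count (R : pzSemiRingType) (T : Type) (r : R) (P : pred T) (s : seq T) :
  \prod_(y <- s) r ^+ P y = r ^+ count P s.
Proof.
elim: s => [|y s IHs]; first by rewrite big_nil.
by rewrite big_cons IHs exprD.
Qed.

Lemma exprD1_ratio_bool_le (R : realFieldType) (e : R) (a b : bool) : 0 <= e ->
  (1 + e) ^+ b / (1 + e) ^+ a <= 1 + e * (b%:R - a%:R) + e ^+ 2.
Proof.
move=> e_ge0; have e1_gt0 : 0 < 1 + e by lra.
have e2_ge0 : 0 <= e ^+ 2 by exact: sqr_ge0.
case: a; case: b => /=; rewrite ?expr1 ?expr0 ?divr1 ?mul1r; try lra.
  by rewrite divff ?gt_eqF //; lra.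
rewrite -div1r ler_pdivrMr //.
have : 0 <= e ^+ 3 by exact: exprn_ge0.
by rewrite !exprS expr0 => ?; nra.
Qed.

Lemma ln_ge_subV (R : realType) (x : R) : 0 < x -> 1 - x^-1 <= ln x.
Proof.
move=> x_gt0; have := expR_ge1Dx (- ln x).
by rewrite expRN lnK ?posrE //; lra.
Qed.

Section TupleSums.
Variables (T : finType) (k : nat).

Lemma sum_tuple_prod (R : pzSemiRingType) (F : 'I_k -> T -> R) :
  \sum_(s : k.-tuple T) \prod_(i < k) F i (tnth s i) = \prod_(i < k) \sum_y F i y.
Proof.
rewrite bigA_distr_bigA /=.
rewrite (reindex (fun f : {ffun 'I_k -> T} => [tuple f i | i < k])) /=.
  by apply: eq_bigr => f _; apply: eq_bigr => i _; rewrite tnth_mktuple.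
exists (fun s : k.-tuple T => [ffun i => tnth s i]) => [f _|s _].
  by apply/ffunP => i; rewrite ffunE tnth_mktuple.
by apply: eq_from_tnth => i; rewrite tnth_mktuple ffunE.
Qed.

Lemma sum_tuple_prod_seq (R : comPzSemiRingType) (g : T -> R) :
  \sum_(s : k.-tuple T) \prod_(y <- s) g y = (\sum_y g y) ^+ k.
Proof.
rewrite -[k in RHS]card_ord -prodr_const -(sum_tuple_prod (fun _ : 'I_k => g)).
by apply: eq_bigr => s _; rewrite big_tuple.
Qed.

Lemma sum_tuple_notin (R : comPzSemiRingType) (u : T) :
  \sum_(s : k.-tuple T) ((u \notin s)%:R : R) = (#|T|.-1)%:R ^+ k.
Proof.
have notinE (s : seq T) : ((u \notin s)%:R : R) = \prod_(y <- s) (y != u)%:R.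
  elim: s => [|y s IHs]; first by rewrite big_nil.
  by rewrite big_cons -IHs in_cons negb_or eq_sym -natrM mulnb.
rewrite (eq_bigr _ (fun (s : k.-tuple T) _ => notinE s)) sum_tuple_prod_seq.
congr (_ ^+ k); rewrite -(cardC1 u) -sumr_const [RHS]big_mkcond /=.
by apply: eq_bigr => y _; rewrite inE; case: (y != u).
Qed.

Lemma sum_tuple_mem_le (R : realDomainType) (u : T) :
  #|T|%:R * \sum_(s : k.-tuple T) ((u \in s)%:R : R) <= k%:R * #|T|%:R ^+ k.
Proof.
have memE (s : k.-tuple T) : ((u \in s)%:R : R) = 1 - (u \notin s)%:R.
  by case: (u \in s); rewrite ?subr0 ?subrr.
rewrite (eq_bigr _ (fun s _ => memE s)) sumrB sum_tuple_notin sumr_const card_tuple.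
rewrite natrX; apply: mulr_subXX_le; rewrite ?ler_nat ?leq_pred //.
by rewrite natr1 ler_nat leqSpred.
Qed.
End TupleSums.

Section CountTail.
Variables (R : realType) (T : finType) (p q : pred T).

Lemma count_le_count_le_prod (r : R) (s : seq T) : 1 <= r ->
  ((count p s <= count q s)%N%:R : R) <= \prod_(y <- s) (r ^+ q y / r ^+ p y).
Proof.
move=> r_ge1; have r_gt0 : 0 < r by apply: lt_le_trans r_ge1.
rewrite prodf_div !prodr_expr_count.
case: leqP => [le_pq|_] /=.
  by rewrite ler_pdivlMr ?exprn_gt0 // mul1r ler_weXn2l.
by apply: divr_ge0; apply: exprn_ge0; apply: ltW.
Qed.

Lemma sum_exprD1_ratio_le (e : R) : 0 <= e ->
  \sum_y ((1 + e) ^+ q y / (1 + e) ^+ p y)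
    <= #|T|%:R + e * (#|q|%:R - #|p|%:R) + #|T|%:R * e ^+ 2.
Proof.
move=> e_ge0; apply: le_trans (ler_sum _ (fun y _ => exprD1_ratio_bool_le (p y) (q y) e_ge0)) _.
rewrite !big_split /= -mulr_sumr sumrB !sumr_pred_card !sumr_const.
by rewrite mulr_natl.
Qed.

Lemma count_le_count_tail (k : nat) (t : R) :
  (0 < #|T|)%N -> 0 <= t -> t <= #|p|%:R - #|q|%:R ->
  \sum_(s : k.-tuple T) ((count p s <= count q s)%N%:R : R)
    <= #|T|%:R ^+ k * expR (- (k%:R * (t ^+ 2 / (4 * #|T|%:R ^+ 2)))).
Proof.
move=> T_gt0 t_ge0 t_le; set N : R := #|T|%:R; set a := t ^+ 2 / _.
have N_gt0 : 0 < N by rewrite ltr0n.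
(* Weight each draw y by (1 + e)^(q y - p y); e = t / (2 N) minimizes the
   bound N - e t + N e^2 on its mean. *)
set e := t / (2 * N); have e_ge0 : 0 <= e by rewrite divr_ge0 // mulr_ge0 // ltW.
have sum_le : \sum_y ((1 + e) ^+ q y / (1 + e) ^+ p y) <= N * (1 - a).
  apply: le_trans (sum_exprD1_ratio_le e_ge0) _.
  have -> : N * (1 - a) = N - e * t + N * e ^+ 2.
    by rewrite /a /e; field; rewrite gt_eqF.
  have : e * t <= e * (#|p|%:R - #|q|%:R) by exact: ler_wpM2l.
  rewrite -/N; lra.
have a_le1 : 0 <= 1 - a.
  rewrite -(pmulr_rge0 _ N_gt0); apply: le_trans sum_le.
  by apply: sumr_ge0 => y _; rewrite divr_ge0 ?exprn_ge0 //; lra.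
have one_le_e : 1 <= 1 + e by lra.
apply: le_trans (ler_sum _ (fun (s : k.-tuple T) _ => count_le_count_le_prod s one_le_e)) _.
rewrite sum_tuple_prod_seq; apply: le_trans (lerXn2r k _ _ sum_le) _.
- by rewrite nnegrE sumr_ge0 // => y _; rewrite divr_ge0 ?exprn_ge0 //; lra.
- by rewrite nnegrE; apply: mulr_ge0 (ltW N_gt0) a_le1.
rewrite exprMn -[- (k%:R * a)]mulrN expRM_natl.
apply: ler_wpM2l; first exact: exprn_ge0 (ltW N_gt0).
by apply: lerXn2r; rewrite ?nnegrE ?expR_ge0 // expR_ge1Dx.
Qed.
End CountTail.

Section Winner.
Variables (n k : nat).
Implicit Types (s : k.-tuple 'I_n) (x : profile n).

Lemma winner_notin s x w : winner s x = Some w -> w \notin s.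
Proof.
rewrite /winner; case: pickP => [u0 u0_notin|_] //; case=> <-.
by case: (@arg_maxnP _ u0 (fun w => w \notin s) (indegS s x) u0_notin).
Qed.

Lemma winner_maximal s x u : u \notin s ->
  exists2 w, winner s x = Some w & (indegS s x u <= indegS s x w)%N.
Proof.
move=> u_notin; rewrite /winner; case: pickP => [u0 u0_notin|/(_ u)]; last by rewrite u_notin.
case: (@arg_maxnP _ u0 (fun w => w \notin s) (indegS s x) u0_notin) => w _ w_max.
by exists w; last exact: w_max.
Qed.

Lemma eq_winner s x x' : indegS s x =1 indegS s x' -> winner s x = winner s x'.
Proof.
move=> eq_indeg; rewrite /winner; case: pickP => // u0 _.
by congr (Some (arg_max _ _ _)); apply: boolp.funext.
Qed.

Lemma impartial_simple_sample (R : realType) : impartial R n k.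
Proof.
move=> x x' u _ _ eq_x; rewrite /prob_win; congr (_%:R / _); apply: eq_card => s.
rewrite !inE; have [u_in|u_notin] := boolP (u \in s).
  have not_winner y : (winner s y == Some u) = false.
    by apply/negbTE/eqP => /winner_notin; rewrite u_in.
  by rewrite !not_winner.
rewrite (@eq_winner s x x') // => w; apply: eq_in_count => v v_in /=.
by rewrite eq_x //; apply: contraNneq u_notin => <-.
Qed.

Definition winner_indeg s x : nat :=
  if winner s x is Some w then indeg x w else 0.

Lemma indeg_sub_winner_le (R : realType) s x (u : 'I_n) (t : R) : 0 <= t ->
  (indeg x u)%:R - (winner_indeg s x)%:R <= t + n%:R * (u \in s)%:R
    + n%:R * \sum_(v | t < (indeg x u)%:R - (indeg x v)%:R)
               (indegS s x u <= indegS s x v)%N%:R.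
Proof.
(* If u is unsampled, the winner w beats u on the sample, so either
   delta(u) - delta(w) <= t or w itself is counted in the sum. *)
move=> t_ge0; set S := \sum_(v | _) _.
have S_ge0 : 0 <= S by exact: sumr_ge0.
have loss_le_n : (indeg x u)%:R - (winner_indeg s x)%:R <= n%:R :> R.
  have : (indeg x u <= n)%N by rewrite -[n in (_ <= n)%N]card_ord max_card.
  by rewrite -(ler_nat R); have := ler0n R (winner_indeg s x); lra.
have n_ge0 : 0 <= n%:R :> R by exact: ler0n.
have [u_in|u_notin] := boolP (u \in s).
  by rewrite mulr1; have := mulr_ge0 n_ge0 S_ge0; lra.
have [w win_w le_uw] := winner_maximal x u_notin.
move: loss_le_n; rewrite /winner_indeg win_w mulr0 addr0 => loss_le_n.
have [|lt_t] := leP ((indeg x u)%:R - (indeg x w)%:R) t.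
  by have := mulr_ge0 n_ge0 S_ge0; lra.
have S_ge1 : 1 <= S.
  by rewrite /S (bigD1 w) //= le_uw lerDl sumr_ge0.
by have := ler_wpM2l n_ge0 S_ge1; lra.
Qed.
End Winner.

Lemma indeg_sub_exp_deg_le (R : realType) n k (x : profile n) (u : 'I_n) (t : R) :
  (0 < n)%N -> 0 <= t ->
  (indeg x u)%:R - exp_deg R k x
    <= t + k%:R + n%:R ^+ 2 * expR (- (k%:R * (t ^+ 2 / (4 * n%:R ^+ 2)))).
Proof.
move=> n_gt0 t_ge0; set E := expR _.
have n_ge0 : 0 <= n%:R :> R by exact: ler0n.
set N : R := n%:R ^+ k; have N_gt0 : 0 < N by rewrite exprn_gt0 ?ltr0n.
have tail v : t < (indeg x u)%:R - (indeg x v)%:R ->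
    \sum_(s : k.-tuple 'I_n) ((indegS s x u <= indegS s x v)%N%:R : R) <= N * E.
  move=> lt_t; have := @count_le_count_tail R _ (fun y => u \in x y) (fun y => v \in x y) k t.
  have indegE w : indeg x w = #|fun y => w \in x y| by apply: eq_card => y; rewrite inE.
  by rewrite card_ord -!indegE; apply => //; apply: ltW.
have sum_tail : \sum_(v | t < (indeg x u)%:R - (indeg x v)%:R)
    \sum_(s : k.-tuple 'I_n) ((indegS s x u <= indegS s x v)%N%:R : R) <= n%:R * (N * E).
  apply: le_trans (ler_sum _ (fun v => tail v)) _.
  rewrite sumr_const mulr_natl; apply: ler_wpMn2l; first exact: mulr_ge0 (ltW N_gt0) (expR_ge0 _).
  by rewrite -[n in (_ <= n)%N]card_ord max_card.
have sum_loss : \sum_(s : k.-tuple 'I_n) ((indeg x u)%:R - (winner_indeg s x)%:R)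
    <= (t + k%:R + n%:R ^+ 2 * E) * N.
  apply: le_trans (ler_sum _ (fun s _ => indeg_sub_winner_le s x u t_ge0)) _.
  rewrite !big_split /= -!mulr_sumr exchange_big /= sumr_const card_tuple card_ord.
  have sum_mem := @sum_tuple_mem_le _ k R u; rewrite card_ord -/N in sum_mem.
  have -> : (t + k%:R + n%:R ^+ 2 * E) * N = t * N + k%:R * N + n%:R * (n%:R * (N * E)).
    by ring.
  rewrite -[t *+ _]mulr_natr natrX -/N.
  by rewrite !lerD // ler_wpM2l.
have -> : exp_deg R k x = (\sum_(s : k.-tuple 'I_n) (winner_indeg s x)%:R) / N.
  by rewrite /exp_deg natrX.
rewrite sumrB sumr_const card_tuple card_ord -[_ *+ (n ^ k)%N]mulr_natr natrX in sum_loss.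
by rewrite -(ler_pM2r N_gt0) mulrBl divfK ?gt_eqF.
Qed.

Section Rate.
Variable R : realType.

Definition sample_rate (n : nat) : R := powR n%:R (2/3) * powR (ln n%:R) (1/3).

Lemma sample_rate_cube n : (0 < n)%N -> sample_rate n ^+ 3 = n%:R ^+ 2 * ln n%:R.
Proof.
move=> n_gt0; have ln_ge0 : 0 <= ln (n%:R : R) by apply: ln_ge0; rewrite ler1n.
rewrite exprMn -!powR_mulrn ?powR_ge0 // -!powRrM.
have -> : (2/3 : R) * 3%:R = 2%:R by field.
have -> : (1/3 : R) * 3%:R = 1 by field.
by rewrite powR_mulrn ?ler0n // powRr1.
Qed.

Lemma sample_rate_ge1 n : (2 <= n)%N -> 1 <= sample_rate n.
Proof.
move=> n_ge2; have n_gt0 : (0 < n)%N by apply: leq_trans n_ge2.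
have two_le_n : 2 <= n%:R :> R by rewrite ler_nat.
have half_le_ln : 1/2 <= ln (n%:R : R).
  have n_gt0' : 0 < n%:R :> R by rewrite ltr0n.
  have : (n%:R : R)^-1 <= 1/2 by rewrite div1r lef_pV2 ?posrE.
  by have := ln_ge_subV n_gt0'; lra.
have rate_ge0 : 0 <= sample_rate n by apply: mulr_ge0; apply: powR_ge0.
have : 2 <= sample_rate n ^+ 3 by rewrite sample_rate_cube //; nra.
have [le_rate1|/ltW //] := leP (sample_rate n) 1.
by have := exprn_ile1 3 rate_ge0 le_rate1; lra.
Qed.

Lemma ksample_bounds n : (2 <= n)%N ->
  sample_rate n <= (ksample R n)%:R <= powR 4 (1/3) * sample_rate n + 1.
Proof.
move=> n_ge2; set c : R := powR 4 (1/3); rewrite /ksample -/c -mulrA -/(sample_rate n).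
have c_ge1 : 1 <= c.
  by rewrite /c -[X in X <= _](powRr0 4); apply: ler_powR; [rewrite ler1n | lra].
have cM_ge1 : 1 <= c * sample_rate n.
  by rewrite -[1]mulr1 ler_pM ?sample_rate_ge1.
rewrite natr_absz ger0_norm; last by rewrite ceil_ge0; lra.
have := ler_wpM2r (ltW (lt_le_trans ltr01 (sample_rate_ge1 n_ge2))) c_ge1.
rewrite mul1r => le_rate; have := ceil_itv (c * sample_rate n).
by rewrite intrB => /andP[? ?]; apply/andP; split; lra.
Qed.

Lemma sample_tail_le1 n k : (2 <= n)%N -> sample_rate n <= k%:R ->
  n%:R ^+ 2 * expR (- (k%:R * ((3 * sample_rate n) ^+ 2 / (4 * n%:R ^+ 2)))) <= 1.
Proof.
move=> n_ge2 le_rate_k; have n_gt0 : (0 < n)%N by apply: leq_trans n_ge2.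
set M := sample_rate n; set L := ln (n%:R : R); set X := k%:R * _.
have n_pos : 0 < n%:R :> R by rewrite ltr0n.
have n2_gt0 : 0 < n%:R ^+ 2 :> R by exact: exprn_gt0.
have L_ge0 : 0 <= L by apply: ln_ge0; rewrite ler1n.
have rate_cube : M ^+ 3 = n%:R ^+ 2 * L by exact: sample_rate_cube.
have two_ln_le : 2 * L <= X.
  rewrite /X mulrA ler_pdivlMr ?mulr_gt0 //.
  have := ler_wpM2r (sqr_ge0 (3 * M)) le_rate_k.
  have -> : M * (3 * M) ^+ 2 = 9 * (n%:R ^+ 2 * L) by rewrite -rate_cube; ring.
  have -> : 2 * L * (4 * n%:R ^+ 2) = 8 * (n%:R ^+ 2 * L) by ring.
  by have := mulr_ge0 (ltW n2_gt0) L_ge0; lra.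
have : expR (- X) <= (n%:R ^+ 2)^-1.
  have -> : (n%:R ^+ 2)^-1 = expR (- (2 * L)) by rewrite expRN expRM_natl lnK ?posrE.
  by rewrite ler_expR; lra.
by rewrite -(ler_pM2l n2_gt0) mulfV ?gt_eqF.
Qed.
End Rate.

Theorem mainTheorem1 (R : realType) :
  (forall n : nat, (2 <= n)%N -> impartial R n (ksample R n)) /\
  (exists C : R, forall n : nat, (2 <= n)%N ->
     forall x : profile n, valid_profile x ->
       (maxindeg x)%:R - exp_deg R (ksample R n) x
         <= C * (powR (n%:R) (2/3) * powR (ln (n%:R)) (1/3))).
Proof.
split=> [n _|]; first exact: impartial_simple_sample.
exists (5 + powR 4 (1/3)) => n n_ge2 x _; rewrite -/(sample_rate R n).
have n_gt0 : (0 < n)%N by apply: leq_trans n_ge2.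
have rate_ge1 := sample_rate_ge1 R n_ge2.
have /andP[le_rate_k le_k] := ksample_bounds R n_ge2.
have tail_le1 := sample_tail_le1 n_ge2 le_rate_k.
rewrite /maxindeg (bigop.bigmax_eq_arg (Ordinal n_gt0)) //.
have t_ge0 : 0 <= 3 * sample_rate R n by lra.
apply: le_trans (indeg_sub_exp_deg_le _ _ _ n_gt0 t_ge0) _.
by rewrite [(5 + _) * _]mulrDl; lra.
Qed.
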